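(* Consider the problem $\min_{x\in\mathbb{R}^n} F(x) := f(x)+\psi(x)+\phi(x)$ under the assumptions A.1–A.4 and with the algorithm CPGD described in the context. Then the iterates of CPGD satisfy, for every $k\ge 0$, $$F(x_{k+1}) \le F(x_k) - \frac{\eta_{\min}}{2}\,\|x_{k+1}-x_k\|^2 .$$
   Context: Block structure: $U\in\mathbb{R}^{n\times n}$ is a column permutation of the identity, $U=[U_1,\dots,U_N]$ with $U_i\in\mathbb{R}^{n\times n_i}$, $\sum_i n_i=n$; every $x\in\mathbb{R}^n$ is written uniquely as $x=\sum_i U_i x^{(i)}$ with $x^{(i)}=U_i^T x\in\mathbb{R}^{n_i}$, and $x^{\neq i}$ denotes the collection of blocks $x^{(j)}$, $j\neq i$. Assumptions: (A.1) $f:\mathbb{R}^n\to\mathbb{R}$ is differentiable and for each $i=1,\dots,N$ there is $L_i(x^{\neq i})$ (possibly depending on the other blocks) with $\|U_i^T(\nabla f(x+U_ih)-\nabla f(x))\|\le L_i(x^{\neq i})\|h\|$ for all $x\in\mathbb{R}^n$, $h\in\mathbb{R}^{n_i}$. (A.2) $\psi:\mathbb{R}^n\to\mathbb{R}$ is twice continuously differentiable (possibly nonconvex and nonseparable), and there are an integer $p\ge1$ and constants $H_{\psi_i}>0$ with $\|U_i^T\nabla^2\psi(y)U_i\|\le H_{\psi_i}\|y\|^p$ for all $y\in\mathbb{R}^n$, $i=1,\dots,N$. (A.3) $\phi$ is the indicator function of a nonempty closed convex set $Q=\prod_{i=1}^N Q_i$, $Q_i\subseteq\mathbb{R}^{n_i}$;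 $\phi_i$ denotes the indicator of $Q_i$, so $\phi(x)=\sum_i\phi_i(x^{(i)})$. (A.4) Problem $\min F$ has a solution, so $F^*=\min F>-\infty$. Let $h=f+\psi$. Algorithm CPGD: start from $x_0\in Q$. For $k\ge0$, set $x_{k,0}=x_k$ and for $i_k=1,\dots,N$ let $x_{k,i_k}=(x_{k+1}^{(1)},\dots,x_{k+1}^{(i_k)},x_k^{(i_k+1)},\dots,x_k^{(N)})$ (so $x_{k,N}=x_{k+1}$). At inner step $i_k$, with current point $x_{k,i_k-1}$ and $L_{i_k}:=L_{i_k}(x_{k,i_k-1}^{\neq i_k})$: (1) choose $H_{f,i_k}=\frac{L_{i_k}+\eta_{i_k}}{2}$ with $\eta_{i_k}>0$, and compute the nonnegative root $\alpha_{k,i_k}\ge0$ of $2^{p-1}H_{\psi_{i_k}}\alpha^{p+1}+(2^{p-1}H_{\psi_{i_k}}\|x_{k,i_k-1}\|^p+H_{f,i_k})\alpha=\|U_{i_k}^T\nabla h(x_{k,i_k-1})\|$; (2) set $H_{F,i_k}=2^{p-1}H_{\psi_{i_k}}\|x_{k,i_k-1}\|^p+2^{p-1}H_{\psi_{i_k}}\alpha_{k,i_k}^p+H_{f,i_k}$; (3) compute $d_{k,i_k}=\arg\min_{d\in\mathbb{R}^{n_{i_k}}}\langle U_{i_k}^T\nabla h(x_{k,i_k-1}),d\rangle+\frac{H_{F,i_k}}{2}\|d\|^2+\phi_{i_k}(x_k^{(i_k)}+d)$, i.e. $x_k^{(i_k)}+d_{k,i_k}=\mathrm{proj}_{Q_{i_k}}\big(x_k^{(i_k)}-\frac{1}{H_{F,i_k}}U_{i_k}^T\nabla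 h(x_{k,i_k-1})\big)$; (4) set $x_{k+1}^{(i_k)}=x_k^{(i_k)}+d_{k,i_k}$. Finally $\eta_{\min}:=\min_{k,i_k}\eta_{i_k}$ (the minimum over all outer iterations $k$ and inner steps $i_k$ of the parameters $\eta_{i_k}$). *)

From HB Require Import structures.
From mathcomp Require Import all_boot all_order all_algebra.
From mathcomp Require Import all_classical all_reals all_analysis.
Set Implicit Arguments. Unset Strict Implicit. Unset Printing Implicit Defensive.
Import Order.TTheory GRing.Theory Num.Theory.
Import numFieldNormedType.Exports.
Local Open Scope ring_scope.
Local Open Scope classical_set_scope.

Section Defs.
Variable R : realType.
Variables n N : nat.
(* Block structure: blk j = the block containing coordinate j.
   (Equivalent to a column permutation U = [U_1,...,U_N] of the identity.) *)
Variable blk : 'I_n -> 'I_N.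

Definition dot (u v : 'rV[R]_n) : R := \sum_(j < n) u ord0 j * v ord0 j.
Definition norm2 (v : 'rV[R]_n) : R := Num.sqrt (dot v v).

(* U_i U_i^T v : keep block i of v, zero the other blocks.  In particular
   ||U_i^T v|| = norm2 (blockP i v), and vectors d with blockP i d = d are the
   U_i d' with d' in R^{n_i}. *)
Definition blockP (i : 'I_N) (v : 'rV[R]_n) : 'rV[R]_n :=
  \row_j (if blk j == i then v ord0 j else 0).

(* ||U_i^T A U_i|| (spectral/operator norm of the i-th diagonal block of A). *)
Definition blk_opnorm (i : 'I_N) (A : 'M[R]_n) : R :=
  sup [set norm2 (blockP i (v *m A^T)) | v in
        [set v : 'rV[R]_n | blockP i v = v /\ norm2 v <= 1]].

Definition inner (x : nat -> 'rV[R]_n) (k i : nat) : 'rV[R]_n :=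
  \row_j (if (blk j < i)%N then x k.+1 ord0 j else x k ord0 j).

(* Q = prod_i Q_i, each Q_i encoded as a cylinder subset of R^n (depending only
   on block i), phi = indicator of Q. *)
Definition Qprod (Qi : 'I_N -> set 'rV[R]_n) : set 'rV[R]_n :=
  [set x | forall i, Qi i x].

Definition convex_set_R (Q : set 'rV[R]_n) : Prop :=
  forall x y (t : R), Q x -> Q y -> 0 <= t <= 1 -> Q (t *: x + (1 - t) *: y).

Definition Fobj (f psi : 'rV[R]_n -> R) (Q : set 'rV[R]_n) (x : 'rV[R]_n) : \bar R :=
  ((f x + psi x)%:E + (if `[< Q x >] then 0%E else +oo%E))%E.

Definition eta_min (eta : nat -> 'I_N -> R) : R :=
  inf [set eta p.1 p.2 | p in [set: nat * 'I_N]].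
End Defs.

From HB Require Import structures.
From mathcomp Require Import all_boot all_order all_algebra.
From mathcomp Require Import all_classical all_reals all_analysis.
From mathcomp Require Import ring lra.
Import Order.TTheory GRing.Theory Num.Theory.
Import numFieldNormedType.Exports.
Local Open Scope ring_scope.
Local Open Scope classical_set_scope.

(* Each inner step moves only block i, from z = x_{k,i-1} to z + d.  The segment from z
   to z + d stays in Q, so minimality of d along it gives the variational inequality
   <g, d> + H_F |d|^2 <= 0, g the block gradient of h = f + psi at z.  The root alpha is
   chosen so that |g| = alpha H_F, hence |d| <= alpha by Cauchy-Schwarz.  On the segment,
   |z + t d|^p <= 2^(p-1) (|z|^p + |d|^p) <= 2^(p-1) (|z|^p + alpha^p), so the block
   Lipschitz bound on grad f and the block Hessian bound on psi give the descent estimate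
   h(z + d) <= h(z) + <g, d> + (L_i + 2^(p-1) H_psi_i (|z|^p + alpha^p)) |d|^2 / 2, which
   together with the variational inequality leaves a decrease of eta_i |d|^2 / 2.  The
   iterates stay in Q, so phi vanishes along them, and summing over the N blocks the
   squared block norms add up to |x_{k+1} - x_k|^2. *)

Section RealInequalities.
Context {R : realType}.

Lemma exprD_le_mean (a b : R) p : (0 < p)%N -> 0 <= a -> 0 <= b ->
  (a + b) ^+ p <= 2 ^+ p.-1 * (a ^+ p + b ^+ p).
Proof.
case: p => // p _ a_ge0 b_ge0; elim: p => [|p IH]; first by rewrite mul1r.
have chebyshev : (a + b) * (a ^+ p.+1 + b ^+ p.+1) <= 2 * (a ^+ p.+2 + b ^+ p.+2).
  have : 0 <= (a ^+ p.+1 - b ^+ p.+1) * (a - b).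
    have [ab|/ltW ba] := leP a b.
      by apply: mulr_le0; rewrite subr_le0 // (@ler_pXn2r _ p.+1) ?nnegrE.
    by apply: mulr_ge0; rewrite subr_ge0 // (@ler_pXn2r _ p.+1) ?nnegrE.
  rewrite !exprS; nra.
rewrite exprS (le_trans (ler_wpM2l (addr_ge0 a_ge0 b_ge0) IH)) //= mulrCA.
by rewrite [2 ^+ p.+1]exprS -mulrA [2 * _]mulrCA ler_wpM2l ?exprn_ge0.
Qed.

Lemma quadratic_min_at_one (a b : R) : 0 < b ->
  (forall s, 0 <= s <= 1 -> a + b <= s * a + s ^+ 2 * b) -> a + 2 * b <= 0.
Proof.
move=> b_gt0 min1; apply/ler_addgt0Pr => e e_gt0.
set u := Num.min 1 (e / b).
have u_gt0 : 0 < u by rewrite lt_min ltr01 divr_gt0.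
have u_le1 : u <= 1 by rewrite ge_min lexx.
have ub_le : u * b <= e by rewrite -ler_pdivlMr // ge_min lexx orbT.
have := min1 (1 - u); rewrite subr_ge0 u_le1 gerBl ltW //= => /(_ isT) h.
have : u * (a + 2 * b - e) <= 0 by nra.
by rewrite pmulr_rle0 // subr_le0 add0r.
Qed.
End RealInequalities.

Section RealCalculus.
Context {R : realType}.

Lemma ler_quadratic_of_derive (g dg : R -> R) (a K : R) :
  (forall t : R, is_derive t (1 : R) g (dg t)) ->
  (forall t, 0 < t < 1 -> dg t <= a + K * t) ->
  forall t, 0 <= t <= 1 -> g t <= g 0 + a * t + K / 2 * t ^+ 2.
Proof.
move=> g_der dg_le t /andP[t_ge0 t_le1].
pose q := g - (a \*: (@id R) + (K / 2) \*: ((@id R) * (@id R))).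
have q_der (s : R) : is_derive s (1 : R) q (dg s - (a + K * s)).
  have : is_derive s (1 : R) q (dg s - (a *: 1 + (K / 2) *: (s *: 1 + s *: 1))).
    by apply: is_deriveB; apply: is_deriveD.
  by move/is_derive_eq; apply; rewrite /GRing.scale /=; field.
have : q t <= q 0.
  apply: (@ler0_derive1_le_cc R q 0 1); rewrite ?in_itv /= ?lexx ?ler01 ?t_ge0 ?t_le1 //.
  - move=> s; rewrite in_itv /= => s01.
    by rewrite derive1E derive_val subr_le0 dg_le.
  - by apply: derivable_within_continuous => s _; case: (q_der s).
have qE s : q s = g s - (a * s + K / 2 * s ^+ 2) by rewrite expr2.
rewrite !qE expr0n /=; lra.
Qed.
End RealCalculus.

Section Euclidean.
Context {R : realType} {n : nat}.
Implicit Types u v w g d : 'rV[R]_n.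

Lemma dotC u v : dot u v = dot v u.
Proof. by apply: eq_bigr => j _; rewrite mulrC. Qed.

Lemma dotDl u v w : dot (u + v) w = dot u w + dot v w.
Proof. by rewrite /dot -big_split; apply: eq_bigr => j _; rewrite mxE mulrDl. Qed.

Lemma dotZl a u w : dot (a *: u) w = a * dot u w.
Proof. by rewrite /dot mulr_sumr; apply: eq_bigr => j _; rewrite mxE mulrA. Qed.

Lemma dotNl u w : dot (- u) w = - dot u w.
Proof. by rewrite -scaleN1r dotZl mulN1r. Qed.

Lemma dotBl u v w : dot (u - v) w = dot u w - dot v w.
Proof. by rewrite dotDl dotNl. Qed.

Lemma dotZr a u w : dot w (a *: u) = a * dot w u.
Proof. by rewrite dotC dotZl dotC. Qed.

Lemma dotDr u v w : dot w (u + v) = dot w u + dot w v.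
Proof. by rewrite dotC dotDl !(dotC w). Qed.

Lemma dotBr u v w : dot w (u - v) = dot w u - dot w v.
Proof. by rewrite dotC dotBl !(dotC w). Qed.

Lemma dot0l w : dot 0 w = 0.
Proof. by rewrite -(scale0r 0) dotZl mul0r. Qed.

Lemma dotvv_ge0 v : 0 <= dot v v.
Proof. by apply: sumr_ge0 => j _; rewrite -expr2 sqr_ge0. Qed.

Lemma dotvv_eq0 v : (dot v v == 0) = (v == 0).
Proof.
apply/idP/eqP => [|->]; last by rewrite dot0l.
rewrite psumr_eq0 => [/allP v0|j _]; last by rewrite -expr2 sqr_ge0.
apply/matrixP => i j; rewrite (ord1 i) mxE.
by have := v0 j (mem_index_enum j); rewrite mulf_eq0 orbb => /eqP.
Qed.

Lemma norm2_ge0 v : 0 <= norm2 v.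
Proof. exact: sqrtr_ge0. Qed.

Lemma sqr_norm2 v : norm2 v ^+ 2 = dot v v.
Proof. by rewrite sqr_sqrtr // dotvv_ge0. Qed.

Lemma norm2_eq0 v : (norm2 v == 0) = (v == 0).
Proof. by rewrite -dotvv_eq0 -sqr_norm2 sqrf_eq0. Qed.

Lemma norm2Z a v : norm2 (a *: v) = `|a| * norm2 v.
Proof. by rewrite /norm2 dotZl dotZr mulrA -expr2 sqrtrM ?sqr_ge0 // sqrtr_sqr. Qed.

Lemma norm2N v : norm2 (- v) = norm2 v.
Proof. by rewrite -scaleN1r norm2Z normrN1 mul1r. Qed.

Lemma cauchy_schwarz u v : dot u v <= norm2 u * norm2 v.
Proof.
have [->|u0] := eqVneq u 0; first by rewrite dot0l mulr_ge0 ?norm2_ge0.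
have [->|v0] := eqVneq v 0; first by rewrite dotC dot0l mulr_ge0 ?norm2_ge0.
have a_gt0 : 0 < norm2 u by rewrite lt0r norm2_eq0 u0 norm2_ge0.
have b_gt0 : 0 < norm2 v by rewrite lt0r norm2_eq0 v0 norm2_ge0.
have := dotvv_ge0 (norm2 v *: u - norm2 u *: v).
rewrite !(dotBl, dotBr, dotZl, dotZr) -!sqr_norm2 (dotC v u).
set a := norm2 u in a_gt0 *; set b := norm2 v in b_gt0 *.
have ab_gt0 : 0 < a * b by apply: mulr_gt0.
nra.
Qed.

Lemma abs_dot_le u v : `|dot u v| <= norm2 u * norm2 v.
Proof.
rewrite ler_norml cauchy_schwarz andbT lerNl -dotNl -(norm2N u).
exact: cauchy_schwarz.
Qed.

Lemma norm2D u v : norm2 (u + v) <= norm2 u + norm2 v.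
Proof.
rewrite -(@ler_pXn2r _ 2) ?nnegrE ?addr_ge0 ?norm2_ge0 //.
rewrite sqr_norm2 dotDl !dotDr -!sqr_norm2 (dotC v u).
have := cauchy_schwarz u v; lra.
Qed.

Lemma norm2_le_of_dot_le g d (H alpha : R) : 0 < H -> 0 <= alpha ->
  norm2 g = alpha * H -> dot g d + H * norm2 d ^+ 2 <= 0 -> norm2 d <= alpha.
Proof.
move=> H_gt0 alpha_ge0 ng decr.
have [->|nd0] := eqVneq (norm2 d) 0; first by [].
have nd_gt0 : 0 < norm2 d by rewrite lt0r nd0 norm2_ge0.
have := cauchy_schwarz (- g) d; rewrite dotNl norm2N ng => cs.
have : H * norm2 d * (norm2 d - alpha) <= 0 by nra.
by rewrite pmulr_rle0 ?mulr_gt0 // subr_le0.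
Qed.
End Euclidean.

Section Blocks.
Context {R : realType} {n N : nat} {blk : 'I_n -> 'I_N}.
Implicit Types (u v w d : 'rV[R]_n) (i : 'I_N).
Local Notation blockP := (blockP blk).

Lemma blockPD i u v : blockP i (u + v) = blockP i u + blockP i v.
Proof. by apply/rowP => j; rewrite !mxE; case: ifP; rewrite ?addr0. Qed.

Lemma blockPZ i a v : blockP i (a *: v) = a *: blockP i v.
Proof. by apply/rowP => j; rewrite !mxE; case: ifP; rewrite ?mulr0. Qed.

Lemma blockPB i u v : blockP i (u - v) = blockP i u - blockP i v.
Proof. by rewrite blockPD -scaleN1r blockPZ scaleN1r. Qed.

Lemma blockP_id i v : blockP i (blockP i v) = blockP i v.
Proof. by apply/rowP => j; rewrite !mxE; case: (blk j == i). Qed.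

Lemma blockP_orth i i' v : i != i' -> blockP i (blockP i' v) = 0.
Proof.
by move=> ii'; apply/rowP => j; rewrite !mxE; case: eqP => // ->; rewrite (negbTE ii').
Qed.

Lemma dot_blockPl i d : blockP i d = d -> forall u, dot u d = dot (blockP i u) d.
Proof.
move=> <- u; apply: eq_bigr => j _; rewrite !mxE.
by case: ifP; rewrite ?mulr0 ?mul0r.
Qed.

Lemma norm2_blockP_le i v : norm2 (blockP i v) <= norm2 v.
Proof.
rewrite /norm2 ler_sqrt ?dotvv_ge0 //; apply: ler_sum => j _; rewrite !mxE.
by case: ifP => _ //; rewrite mulr0 -expr2 sqr_ge0.
Qed.

Lemma sum_sqr_norm2_blockP w : \sum_i norm2 (blockP i w) ^+ 2 = norm2 w ^+ 2.
Proof.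
under eq_bigr do rewrite sqr_norm2.
rewrite sqr_norm2 /dot exchange_big /=; apply: eq_bigr => j _.
rewrite (bigD1 (blk j)) //= big1 ?addr0 => [|i /negbTE ne]; rewrite !mxE ?eqxx //.
by rewrite eq_sym ne mulr0.
Qed.

Lemma blockP_update_id i u d : blockP i (u + blockP i (d - u)) = blockP i d.
Proof. by rewrite blockPD blockP_id blockPB addrC subrK. Qed.

Lemma blockP_update_orth i i' u d : i' != i ->
  blockP i' (u + blockP i d) = blockP i' u.
Proof. by move=> i'i; rewrite blockPD blockP_orth // addr0. Qed.
End Blocks.

Section BlockOperatorNorm.
Context {R : realType} {n N : nat} (blk : 'I_n -> 'I_N).
Implicit Types (v d : 'rV[R]_n) (A B : 'M[R]_n).
Local Notation blockP := (blockP blk).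

Lemma norm2_mul_le v B :
  norm2 (v *m B) <= norm2 v * Num.sqrt (\sum_j norm2 (col j B)^T ^+ 2).
Proof.
have sum_ge0 : 0 <= \sum_j norm2 (col j B)^T ^+ 2.
  by apply: sumr_ge0 => j _; rewrite exprn_ge0 ?norm2_ge0.
rewrite -(@ler_pXn2r _ 2) ?nnegrE ?mulr_ge0 ?norm2_ge0 ?sqrtr_ge0 //.
rewrite exprMn sqr_norm2 (sqr_sqrtr sum_ge0) mulr_sumr; apply: ler_sum => j _.
have -> : (v *m B) ord0 j = dot v (col j B)^T.
  by rewrite mxE; apply: eq_bigr => k _; rewrite !mxE.
rewrite -expr2 -exprMn -(real_normK (num_real _)).
by rewrite (@ler_pXn2r _ 2) ?nnegrE ?mulr_ge0 ?norm2_ge0 // abs_dot_le.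
Qed.

Lemma blk_opnorm_ge {i} A {v} : blockP i v = v -> norm2 v <= 1 ->
  norm2 (blockP i (v *m A^T)) <= blk_opnorm blk i A.
Proof.
move=> vi v_le1; apply: ub_le_sup; last by exists v.
exists (Num.sqrt (\sum_j norm2 (col j A^T)^T ^+ 2)) => _ [w [_ w_le1] <-].
apply: le_trans (norm2_blockP_le _ _) _.
apply: le_trans (norm2_mul_le _ _) _.
by rewrite ler_piMl ?sqrtr_ge0.
Qed.

Lemma dot_mul_le_blk_opnorm {i} A {d} : blockP i d = d ->
  dot (d *m A^T) d <= blk_opnorm blk i A * norm2 d ^+ 2.
Proof.
move=> di; have [->|d0] := eqVneq d 0.
  by rewrite mul0mx dot0l sqr_norm2 dot0l mulr0.
have nd_gt0 : 0 < norm2 d by rewrite lt0r norm2_eq0 d0 norm2_ge0.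
rewrite (dot_blockPl _ _ di) (le_trans (cauchy_schwarz _ _)) // expr2 mulrA.
rewrite ler_wpM2r ?norm2_ge0 // -ler_pdivrMr //.
set u := (norm2 d)^-1 *: d.
have ui : blockP i u = u by rewrite blockPZ di.
have u_le1 : norm2 u <= 1.
  by rewrite norm2Z ger0_norm ?invr_ge0 ?norm2_ge0 // mulVf ?gt_eqF.
have := blk_opnorm_ge A ui u_le1.
by rewrite -scalemxAl blockPZ norm2Z ger0_norm ?invr_ge0 ?norm2_ge0 // mulrC.
Qed.
End BlockOperatorNorm.

Section LineCalculus.
Context {R : realType} {n : nat}.
Implicit Types z d : 'rV[R]_n.

Lemma is_derive_line (W : normedModType R) (F : 'rV[R]_n -> W) z d (t : R) :
  derivable F (z + t *: d) d ->
  is_derive t (1 : R) (fun s : R => F (z + s *: d)) ('D_d F (z + t *: d)).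
Proof.
have E : (fun h : R => h^-1 *: (((fun s : R => F (z + s *: d)) \o shift t) (h *: 1)
                                 - F (z + t *: d)))
       = (fun h : R => h^-1 *: ((F \o shift (z + t *: d)) (h *: d) - F (z + t *: d))).
  apply/funext => h /=; congr (_ *: (F _ - _)).
  have -> : h *: (1:R) = h by rewrite /GRing.scale /= mulr1.
  by rewrite scalerDl addrCA.
move=> hF; apply: DeriveDef.
  by rewrite /derivable E.
by rewrite /derive E.
Qed.

Lemma is_derive_line_dot (G : 'rV[R]_n -> 'rV[R]_n) z d w (t : R) :
  differentiable G (z + t *: d) ->
  is_derive t (1 : R) (fun s : R => dot (G (z + s *: d)) w) (dot ('d G (z + t *: d) d) w).
Proof.
move=> dG; set H := fun s : R => G (z + s *: d).
have H_der : is_derive t (1 : R) H ('d G (z + t *: d) d).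
  apply: is_derive_eq; first exact/is_derive_line/diff_derivable.
  by rewrite deriveE.
have Hj_der j : is_derive t (1 : R) (fun s => H s ord0 j) ('d G (z + t *: d) d ord0 j).
  have dH := @ex_derive _ _ _ _ _ _ _ H_der.
  apply: DeriveDef; first exact: ((derivable_mxP _ _ _).1 dH ord0 j).
  by have := derive_mx dH; rewrite derive_val => /matrixP /(_ ord0 j) ->; rewrite mxE.
have -> : (fun s : R => dot (H s) w) = \sum_(j < n) (w ord0 j \*: (fun s => H s ord0 j)).
  by apply/funext => s; rewrite fct_sumE; apply: eq_bigr => j _ /=; rewrite mulrC.
by apply: is_derive_eq; apply: eq_bigr => j _; rewrite mulrC.
Qed.

Lemma descent_lemma (F : 'rV[R]_n -> R) (gF : 'rV[R]_n -> 'rV[R]_n) z d (K : R) :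
  (forall v, differentiable F v) -> (forall v u, 'd F v u = dot (gF v) u) ->
  (forall t, 0 < t < 1 -> dot (gF (z + t *: d) - gF z) d <= K * t) ->
  F (z + d) <= F z + dot (gF z) d + K / 2.
Proof.
move=> dF dFE slope.
have F_der (t : R) : is_derive t (1 : R) (fun s => F (z + s *: d)) (dot (gF (z + t *: d)) d).
  apply: is_derive_eq; first exact/is_derive_line/diff_derivable.
  by rewrite deriveE // dFE.
have /= := ler_quadratic_of_derive _ _ (dot (gF z) d) K F_der _ 1.
rewrite scale1r scale0r addr0 mulr1 expr1n mulr1; apply; last by rewrite lexx ler01.
by move=> t t01; rewrite -[X in X <= _](subrK (dot (gF z) d)) -dotBl addrC lerD2l slope.
Qed.
End LineCalculus.

Section BlockStep.
Context {R : realType} {n N : nat} {blk : 'I_n -> 'I_N}.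
Context {f psi : 'rV[R]_n -> R} {gf gpsi : 'rV[R]_n -> 'rV[R]_n} {Hpsi : 'rV[R]_n -> 'M[R]_n}.
Hypotheses (df : forall v, differentiable f v) (dfE : forall v u, 'd f v u = dot (gf v) u).
Hypotheses (dpsi : forall v, differentiable psi v)
  (dpsiE : forall v u, 'd psi v u = dot (gpsi v) u).
Hypotheses (dgpsi : forall v, differentiable gpsi v)
  (dgpsiE : forall v u, 'd gpsi v u = u *m (Hpsi v)^T).
Context {i : 'I_N} {z d : 'rV[R]_n}.
Hypothesis di : blockP blk i d = d.

Lemma block_descent_f (Lz : R) :
  (forall h, blockP blk i h = h -> norm2 (blockP blk i (gf (z + h) - gf z)) <= Lz * norm2 h) ->
  f (z + d) <= f z + dot (gf z) d + Lz * norm2 d ^+ 2 / 2.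
Proof.
move=> Lip; apply: descent_lemma => // t /andP[t_gt0 _].
rewrite (dot_blockPl _ _ di) (le_trans (cauchy_schwarz _ _)) //.
have tdi : blockP blk i (t *: d) = t *: d by rewrite blockPZ di.
have := Lip _ tdi; rewrite norm2Z (ger0_norm (ltW t_gt0)) => Lip_t.
have := ler_wpM2r (norm2_ge0 d) Lip_t; rewrite expr2; lra.
Qed.

Section HessianBound.
Context {Hps : R} {p : nat}.
Hypotheses (p_gt0 : (0 < p)%N) (Hps_ge0 : 0 <= Hps).
Hypothesis Hbound : forall y, blk_opnorm blk i (Hpsi y) <= Hps * norm2 y ^+ p.

Lemma hessian_segment_bound t : 0 <= t <= 1 ->
  dot (d *m (Hpsi (z + t *: d))^T) d <=
  2 ^+ p.-1 * Hps * (norm2 z ^+ p + norm2 d ^+ p) * norm2 d ^+ 2.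
Proof.
move=> /andP[t_ge0 t_le1].
apply: le_trans (dot_mul_le_blk_opnorm blk _ di) _.
rewrite ler_wpM2r ?exprn_ge0 ?norm2_ge0 //.
apply: le_trans (Hbound _) _; rewrite [2 ^+ _ * Hps]mulrC -mulrA ler_wpM2l //.
have seg : norm2 (z + t *: d) <= norm2 z + norm2 d.
  apply: le_trans (norm2D _ _) _; rewrite lerD2l norm2Z ger0_norm //.
  by rewrite ler_piMl ?norm2_ge0.
apply: le_trans (exprD_le_mean _ _ _ p_gt0 (norm2_ge0 z) (norm2_ge0 d)).
by rewrite ler_pXn2r ?nnegrE ?addr_ge0 ?norm2_ge0.
Qed.

Lemma block_descent_psi :
  psi (z + d) <= psi z + dot (gpsi z) d +
    2 ^+ p.-1 * Hps * (norm2 z ^+ p + norm2 d ^+ p) * norm2 d ^+ 2 / 2.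
Proof.
set M := 2 ^+ p.-1 * Hps * _ * _.
apply: descent_lemma => // t /andP[t_gt0 t_lt1].
have slope_der (s : R) : is_derive s (1 : R) (fun r => dot (gpsi (z + r *: d)) d)
    (dot (d *m (Hpsi (z + s *: d))^T) d).
  by apply: is_derive_eq; [exact: is_derive_line_dot | rewrite dgpsiE].
have := ler_quadratic_of_derive _ _ M 0 slope_der _ t.
rewrite !(scale0r, mul0r, addr0) dotBl lerBlDl; apply; last by rewrite !ltW.
by move=> s /andP[s_gt0 s_lt1]; rewrite mul0r addr0 hessian_segment_bound // !ltW.
Qed.

Lemma block_sufficient_decrease {Lz eta alpha : R} :
  (forall h, blockP blk i h = h -> norm2 (blockP blk i (gf (z + h) - gf z)) <= Lz * norm2 h) ->
  0 < eta -> 0 <= alpha ->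
  let g := blockP blk i (gf z + gpsi z) in
  let Hf := (Lz + eta) / 2 in
  let c := 2 ^+ p.-1 * Hps in
  let HF := c * norm2 z ^+ p + c * alpha ^+ p + Hf in
  c * alpha ^+ p.+1 + (c * norm2 z ^+ p + Hf) * alpha = norm2 g ->
  (forall s, 0 <= s <= 1 ->
     dot g d + HF / 2 * norm2 d ^+ 2 <= dot g (s *: d) + HF / 2 * norm2 (s *: d) ^+ 2) ->
  f (z + d) + psi (z + d) <= f z + psi z - eta / 2 * norm2 d ^+ 2.
Proof.
move=> Lip eta_gt0 alpha_ge0 g Hf c HF root opt.
have [d0|d_neq0] := eqVneq d 0.
  by rewrite d0 !addr0 sqr_norm2 dot0l mulr0 subr0.
have nd_gt0 : 0 < norm2 d by rewrite lt0r norm2_eq0 d_neq0 norm2_ge0.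
have Lz_ge0 : 0 <= Lz.
  by have := Lip d di; have := norm2_ge0 (blockP blk i (gf (z + d) - gf z)); nra.
have c_ge0 : 0 <= c by rewrite mulr_ge0 ?exprn_ge0.
have zp_ge0 : 0 <= norm2 z ^+ p by rewrite exprn_ge0 ?norm2_ge0.
have ap_ge0 : 0 <= alpha ^+ p by rewrite exprn_ge0.
have HF_gt0 : 0 < HF.
  by rewrite /HF /Hf; have := mulr_ge0 c_ge0 zp_ge0; have := mulr_ge0 c_ge0 ap_ge0; lra.
have D_gt0 : 0 < norm2 d ^+ 2 by rewrite exprn_gt0.
have decr : dot g d + HF * norm2 d ^+ 2 <= 0.
  suff : dot g d + 2 * (HF / 2 * norm2 d ^+ 2) <= 0 by lra.
  apply: quadratic_min_at_one; first by rewrite !mulr_gt0 ?invr_gt0.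
  move=> s s01; have := opt s s01; case/andP: s01 => s_ge0 _.
  rewrite dotZr norm2Z ger0_norm // exprMn; lra.
have nd_le : norm2 d <= alpha.
  by apply: norm2_le_of_dot_le HF_gt0 alpha_ge0 _ decr; rewrite -root /HF exprS; ring.
have := block_descent_f _ Lip.
have := block_descent_psi.
have -> : dot (gf z) d = dot g d - dot (gpsi z) d.
  by rewrite /g -(dot_blockPl _ _ di) dotDl addrK.
have dp_le : norm2 d ^+ p <= alpha ^+ p by rewrite ler_pXn2r ?nnegrE ?norm2_ge0.
have := ler_wpM2r (ltW D_gt0) (ler_wpM2l c_ge0 (lerD (lexx (norm2 z ^+ p)) dp_le)).
have := mulr_ge0 (mulr_ge0 c_ge0 (addr_ge0 zp_ge0 ap_ge0)) (ltW D_gt0).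
rewrite /HF /Hf /c in decr *; lra.
Qed.
End HessianBound.
End BlockStep.

Section ProductConstraint.
Context {R : realType} {n N : nat} {blk : 'I_n -> 'I_N} {Qi : 'I_N -> set 'rV[R]_n}.
Hypothesis Qi_local : forall i v w, blockP blk i v = blockP blk i w -> (Qi i v <-> Qi i w).

Lemma Qprod_iterates {x : nat -> 'rV[R]_n} :
  Qprod Qi (x 0%N) -> (forall k i, Qi i (x k + blockP blk i (x k.+1 - x k))) ->
  forall k, Qprod Qi (x k).
Proof.
move=> Qx0 Qstep [|k] // i.
exact: (Qi_local _ _ _ (blockP_update_id i (x k) _)).1 (Qstep k i).
Qed.

Lemma Qprod_block_update {i u d} : blockP blk i d = d ->
  Qprod Qi u -> Qi i (u + d) -> Qprod Qi (u + d).
Proof.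
move=> di Qu Qud j; have [-> //|ji] := eqVneq j i.
by apply: (Qi_local _ _ _ _).2 (Qu j); rewrite -di blockP_update_orth.
Qed.
End ProductConstraint.

Lemma convex_segment {R : realType} {n : nat} {Q : set 'rV[R]_n} {u d s} :
  convex_set_R Q -> Q u -> Q (u + d) -> 0 <= s <= 1 -> Q (u + s *: d).
Proof.
move=> Qconv Qu Qud s01; have := Qconv _ _ s Qud Qu s01.
by congr Q; apply/rowP => j; rewrite !mxE; ring.
Qed.

Lemma Fobj_in {R : realType} {n : nat} (f psi : 'rV[R]_n -> R) (Q : set 'rV[R]_n) y :
  Q y -> Fobj f psi Q y = (f y + psi y)%:E.
Proof. by move=> Qy; rewrite /Fobj asboolT // adde0. Qed.

Lemma eta_min_le {R : realType} {N : nat} (eta : nat -> 'I_N -> R) k i :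
  (forall k i, 0 <= eta k i) -> eta_min eta <= eta k i.
Proof.
move=> eta_ge0; apply: ge_inf; last by exists (k, i).
by exists 0 => _ [[k' i'] _ <-]; exact: eta_ge0.
Qed.

Section InnerPoints.
Context {R : realType} {n N : nat} (blk : 'I_n -> 'I_N) (x : nat -> 'rV[R]_n) (k : nat).

Lemma inner0 : inner blk x k 0 = x k.
Proof. by apply/rowP => j; rewrite mxE ltn0. Qed.

Lemma innerN : inner blk x k N = x k.+1.
Proof. by apply/rowP => j; rewrite mxE ltn_ord. Qed.

Lemma inner_succ (i : 'I_N) :
  inner blk x k i.+1 = inner blk x k i + blockP blk i (x k.+1 - x k).
Proof.
apply/rowP => j; rewrite !mxE ltnS leq_eqVlt.
have -> : (blk j == i) = (nat_of_ord (blk j) == i) by [].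
by case: (ltngtP (blk j) i); rewrite ?addr0 // addrC subrK.
Qed.
End InnerPoints.

Theorem lemma1 (R : realType) (n N : nat) (blk : 'I_n -> 'I_N)
  (f psi : 'rV[R]_n -> R) (gf gpsi : 'rV[R]_n -> 'rV[R]_n)
  (Hpsi : 'rV[R]_n -> 'M[R]_n)
  (L : 'I_N -> 'rV[R]_n -> R) (p : nat) (Hps : 'I_N -> R)
  (Qi : 'I_N -> set 'rV[R]_n)
  (x : nat -> 'rV[R]_n) (eta alpha : nat -> 'I_N -> R) :
  (* (A.1) f differentiable with gradient gf; blockwise Lipschitz gradient,
     with constant L i depending only on the blocks other than i *)
  (forall v, differentiable f v) ->
  (forall v u, 'd f v u = dot (gf v) u) ->
  (forall i v w, v - blockP blk i v = w - blockP blk i w -> L i v = L i w) ->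
  (forall i v h, blockP blk i h = h ->
     norm2 (blockP blk i (gf (v + h) - gf v)) <= L i v * norm2 h) ->
  (* (A.2) psi is C^2 with gradient gpsi and Hessian Hpsi; block Hessian bound *)
  (forall v, differentiable psi v) ->
  (forall v u, 'd psi v u = dot (gpsi v) u) ->
  (forall v, differentiable gpsi v) ->
  (forall v u, 'd gpsi v u = u *m (Hpsi v)^T) ->
  continuous Hpsi ->
  (1 <= p)%N ->
  (forall i, 0 < Hps i) ->
  (forall i y, blk_opnorm blk i (Hpsi y) <= Hps i * norm2 y ^+ p) ->
  (* (A.3) Q = prod_i Q_i nonempty closed convex, Q_i depends only on block i *)
  (forall i v w, blockP blk i v = blockP blk i w -> (Qi i v <-> Qi i w)) ->
  (exists v, Qprod Qi v) ->
  closed (Qprod Qi) ->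
  convex_set_R (Qprod Qi) ->
  (* (A.4) F has a minimizer *)
  (exists xs, forall y, (Fobj f psi (Qprod Qi) xs <= Fobj f psi (Qprod Qi) y)%E) ->
  (* Algorithm CPGD *)
  Qprod Qi (x 0%N) ->
  (forall k i,
     let z := inner blk x k (nat_of_ord i) in
     let g := blockP blk i (gf z + gpsi z) in
     let Hf := (L i z + eta k i) / 2 in
     let c := 2 ^+ p.-1 * Hps i in
     let HF := c * norm2 z ^+ p + c * alpha k i ^+ p + Hf in
     let d := blockP blk i (x k.+1 - x k) in
     [/\ 0 < eta k i,
         0 <= alpha k i,
         c * alpha k i ^+ p.+1 + (c * norm2 z ^+ p + Hf) * alpha k i = norm2 g,
         Qi i (x k + d) &
         forall d', blockP blk i d' = d' -> Qi i (x k + d') ->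
           dot g d + HF / 2 * norm2 d ^+ 2 <= dot g d' + HF / 2 * norm2 d' ^+ 2]) ->
  forall k : nat,
    (Fobj f psi (Qprod Qi) (x k.+1) <=
     Fobj f psi (Qprod Qi) (x k) - (eta_min eta / 2 * norm2 (x k.+1 - x k) ^+ 2)%:E)%E.
Proof.
(* Neither A.4, nor nonemptiness and closedness of Q, nor the continuity of the Hessian
   and the dependence of L on the other blocks only, is needed for the decrease. *)
move=> df dfE _ Lip dpsi dpsiE dgpsi dgpsiE _ p_gt0 Hps_gt0 Hbound Qi_local _ _ Qconv _ x0Q
  step k.
have xQ : forall m, Qprod Qi (x m).
  by apply: (Qprod_iterates Qi_local x0Q) => m i; case: (step m i).
have eta_ge0 m j : 0 <= eta m j by case: (step m j) => /ltW.
rewrite !Fobj_in ?xQ // -EFinB lee_fin.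
pose Phi m := f (inner blk x k m) + psi (inner blk x k m).
have Phi_step (i : 'I_N) :
    Phi i.+1 - Phi i <= - (eta_min eta / 2 * norm2 (blockP blk i (x k.+1 - x k)) ^+ 2).
  have [eta_gt0 alpha_ge0 root Qd opt] := step k i.
  set d := blockP blk i (x k.+1 - x k) in Qd opt *.
  have di : blockP blk i d = d by rewrite blockP_id.
  have Qseg s (s01 : 0 <= s <= 1) : Qi i (x k + s *: d).
    exact: convex_segment Qconv (xQ k) (Qprod_block_update Qi_local di (xQ k) Qd) s01 i.
  have decr : Phi i.+1 <= Phi i - eta k i / 2 * norm2 d ^+ 2.
    rewrite /Phi inner_succ -/d.
    apply: (block_sufficient_decrease df dfE dpsi dpsiE dgpsi dgpsiE di p_gt0
      (ltW (Hps_gt0 i)) (Hbound i) (Lip i _) eta_gt0 alpha_ge0 root) => s s01.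
    by apply: opt; [rewrite blockPZ di | exact: Qseg].
  have := ler_wpM2r (exprn_ge0 2 (norm2_ge0 d)) (eta_min_le eta k i eta_ge0).
  lra.
have : \sum_(i < N) (Phi i.+1 - Phi i) <=
       \sum_(i < N) - (eta_min eta / 2 * norm2 (blockP blk i (x k.+1 - x k)) ^+ 2).
  by apply: ler_sum => i _; exact: Phi_step.
rewrite -(big_mkord xpredT (fun m => Phi m.+1 - Phi m)) telescope_sumr //.
rewrite sumrN -mulr_sumr sum_sqr_norm2_blockP /Phi inner0 innerN; lra.
Qed.
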